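(* Let $k\ge2$ be fixed. Then $m_k(n)/\gamma_k(n)\to1$ as $n\to\infty$.
   Context: Let $G=\{g_1=e,\dots,g_k\}$ be a group of order $k$. A labeled graph on $G$ with $n$ edges has vertex set $G$ and $n$ directed edges labeled $1,\dots,n$, each an ordered pair of vertices (loops and multiple edges allowed). The degree of a vertex is the number of edges having it as initial or terminal point, a loop counted twice. $m_k(n)$ is the number of such graphs having an Eulerian path starting at $e$ in the underlying undirected graph (a walk ignoring orientations starting at $e$ and using each edge exactly once). A graph has an Eulerian pseudo-path from $e$ to $g_i$ if all vertices other than $e,g_i$ have even degree, $\deg e$ is even when $g_i=e$, and $\deg e,\deg g_i$ are odd when $g_i\neq e$ (no connectivity required); $\gamma_k(n)$ is the number of labeled graphs on $G$ with $n$ edges having an Eulerian pseudo-path from $e$ to some vertex of $G$. *)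

From HB Require Import structures.
From mathcomp Require Import all_boot all_order all_algebra all_fingroup.
Set Implicit Arguments. Unset Strict Implicit. Unset Printing Implicit Defensive.
Import Order.TTheory GRing.Theory Num.Theory.

(* A labeled graph on the group gT with n edges: edge i is the ordered pair
   (initial point, terminal point). Loops and multiple edges are allowed. *)
Definition lgraph (gT : finGroupType) (n : nat) := {ffun 'I_n -> gT * gT}.

(* degree: number of edge ends at x (a loop counts twice) *)
Definition deg (gT : finGroupType) (n : nat) (g : lgraph gT n) (x : gT) : nat :=
  \sum_(i < n) ((x == (g i).1) + (x == (g i).2)).

(* Eulerian path starting at e = 1 in the underlying undirected graph:
   an ordering p of the edges and vertices v_0 = 1, v_1, ..., v_n such that
   the i-th edge of the ordering joins v_i and v_{i+1} (in either direction). *)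
Definition has_euler_path (gT : finGroupType) (n : nat) (g : lgraph gT n) : bool :=
  [exists p : {perm 'I_n}, exists v : {ffun 'I_n.+1 -> gT},
     (v ord0 == 1%g) &&
     [forall i : 'I_n,
        let a := v (widen_ord (leqnSn n) i) in
        let b := v (lift ord0 i) in
        (g (p i) == (a, b)) || (g (p i) == (b, a))]].

Definition has_euler_pseudo_path (gT : finGroupType) (n : nat) (g : lgraph gT n) : bool :=
  [exists t : gT,
     [forall x : gT, ((x != 1%g) && (x != t)) ==> ~~ odd (deg g x)] &&
     (if t == 1%g then ~~ odd (deg g 1%g)
      else odd (deg g 1%g) && odd (deg g t))].

Definition m_k (gT : finGroupType) (n : nat) : nat :=
  #|[set g : lgraph gT n | has_euler_path g]|.

Definition gamma_k (gT : finGroupType) (n : nat) : nat :=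
  #|[set g : lgraph gT n | has_euler_pseudo_path g]|.

From HB Require Import structures.
From mathcomp Require Import all_boot all_order all_algebra all_fingroup.
From mathcomp Require Import zify.
Import Order.TTheory GRing.Theory Num.Theory.
Set Implicit Arguments. Unset Strict Implicit. Unset Printing Implicit Defensive.

(* Euler's theorem: the parity condition of an Eulerian pseudo-path from 1
   yields an Eulerian path as soon as every edge is reachable from 1. Hence
   gamma_k n - m_k n is at most the number of graphs having no edge across some
   cut A with 1 in A <> G, i.e. at most 2^k ((k-1)^2 + 1)^n. On the other hand,
   appending k edges that fix the parity of every vertex shows
   gamma_k n >= (k^2)^(n-k). As (k-1)^2 + 1 < k^2, Bernoulli's inequality gives
   (gamma_k n - m_k n) * n <= C gamma_k n for a constant C. *)

Section EulerianWalks.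

Variables (T : finType) (I : eqType) (g : I -> T * T).

Definition joins i a b := (g i == (a, b)) || (g i == (b, a)).

Definition degs (E : seq I) x := \sum_(i <- E) ((x == (g i).1) + (x == (g i).2)).

Definition inside (A : {set T}) i := ((g i).1 \in A) && ((g i).2 \in A).

Definition crossing (A : {set T}) i := ((g i).1 \in A) != ((g i).2 \in A).

(* Every edge of E lies in the connected component of s. *)
Definition connected_from E s :=
  [forall A : {set T}, (s \in A) ==> all (inside A) E || has (crossing A) E].

Definition odd_ends E s t := forall x, odd (degs E x) = ((x == s) != (x == t)).

Inductive walk : T -> seq I -> T -> Prop :=
| walk_nil s : walk s [::] s
| walk_cons s u t i W : joins i s u -> walk u W t -> walk s (i :: W) t.

Lemma joins_sym i a b : joins i a b = joins i b a.
Proof. exact: orbC. Qed.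

Lemma joins_ends i a b x :
  joins i a b -> (x == (g i).1) + (x == (g i).2) = (x == a) + (x == b).
Proof. by case/orP => /eqP -> //=; rewrite addnC. Qed.

Lemma joins_crossing i a b A : joins i a b -> crossing A i = ((a \in A) != (b \in A)).
Proof. by rewrite /crossing => /orP[] /eqP -> //=; rewrite eq_sym. Qed.

Lemma crossingC A i : crossing (~: A) i = crossing A i.
Proof. by rewrite /crossing !inE; case: (_ \in A); case: (_ \in A). Qed.

Lemma degs_perm E F x : perm_eq E F -> degs E x = degs F x.
Proof. by move=> eEF; rewrite /degs (perm_big _ eEF). Qed.

Lemma degs_cons i E x : degs (i :: E) x = (x == (g i).1) + (x == (g i).2) + degs E x.
Proof. by rewrite /degs big_cons. Qed.

Lemma sum_degs E : \sum_x degs E x = (size E).*2.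
Proof.
rewrite /degs exchange_big /= -muln2 -sum1_size big_distrl /=.
have sum_eq1 a : \sum_(x : T) (x == a : nat) = 1.
  by rewrite (bigD1 a) //= eqxx big1 // => y /negbTE ->.
by apply: eq_bigr => i _; rewrite big_split /= !sum_eq1.
Qed.

Lemma odd_sum_degs E : ~~ odd (\sum_x degs E x).
Proof. by rewrite sum_degs odd_double. Qed.

Lemma degs_inside A E x : {in E, forall j, ~~ crossing A j} ->
  degs (filter (inside A) E) x = if x \in A then degs E x else 0.
Proof.
have neq y z : y \in A -> z \notin A -> (y == z) = false.
  by move=> yA; apply: contraNF => /eqP <-.
move=> noncrossing; rewrite /degs big_filter; case: ifPn => [xA | xNA].
  rewrite big_mkcond; apply: eq_big_seq => j /noncrossing.
  rewrite /crossing negbK /inside => /eqP same; case: ifPn => //.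
  by rewrite -same andbb => jNA; rewrite !neq // -same.
rewrite big1_seq // => j /andP[/andP[j1 j2] _].
by rewrite ![x == _]eq_sym !neq.
Qed.

Lemma odd_sum (F : T -> nat) : odd (\sum_x F x) = \big[addb/false]_x odd (F x).
Proof. by apply: (big_morph odd) => // m n; rewrite oddD. Qed.

Lemma odd_ends_perm E F s t : perm_eq E F -> odd_ends E s t -> odd_ends F s t.
Proof. by move=> eEF oddE x; rewrite -(degs_perm x eEF). Qed.

Lemma odd_ends_nil s t : odd_ends [::] s t -> s = t.
Proof. by move/(_ s); rewrite /degs big_nil eqxx; case: (s =P t). Qed.

Lemma odd_ends_cons i E s u t :
  joins i s u -> odd_ends (i :: E) s t -> odd_ends E u t.
Proof.
move=> isu oddE x; have := oddE x; rewrite degs_cons (joins_ends x isu) !oddD !oddb.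
by case: (x == s); case: (x == u); case: (x == t); case: (odd _).
Qed.

Lemma odd_ends_side A E s t : {in E, forall j, ~~ crossing A j} ->
  odd_ends E s t -> s \in A -> t \in A.
Proof.
move=> noncrossing oddE sA; apply: contraT => tNA.
have := odd_sum_degs (filter (inside A) E); rewrite odd_sum.
rewrite (eq_bigr (fun x => x == s)) => [|x _]; last first.
  rewrite degs_inside //; case: ifPn => [xA | xNA]; last first.
    by rewrite eq_sym (negbTE (memPn xNA _ sA)).
  by rewrite oddE (negbTE (memPn tNA _ xA)); case: (x == s).
by rewrite (bigD1 s) //= eqxx big1 // => y /negbTE ->.
Qed.

Lemma odd_ends_inside A E s t : {in E, forall j, ~~ crossing A j} ->
  odd_ends E s t -> s \in A -> t \in A -> odd_ends (filter (inside A) E) s t.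
Proof.
move=> noncrossing oddE sA tA x; rewrite degs_inside //; case: ifPn => // xNA.
by rewrite ![x == _]eq_sym (negbTE (memPn xNA _ sA)) (negbTE (memPn xNA _ tA)).
Qed.

Lemma odd_ends_outside A E s t r : {in E, forall j, ~~ crossing A j} ->
  odd_ends E s t -> s \notin A -> t \notin A -> odd_ends (filter (inside A) E) r r.
Proof.
move=> noncrossing oddE sNA tNA x; rewrite degs_inside // eqxx; case: ifPn => // xA.
by rewrite oddE (negbTE (memPn sNA _ xA)) (negbTE (memPn tNA _ xA)).
Qed.

Lemma walk_cat s m t W1 W2 : walk s W1 m -> walk m W2 t -> walk s (W1 ++ W2) t.
Proof. by elim=> // s' u t' i W' isu _ IH /IH; apply: walk_cons. Qed.

Lemma walk_odd_ends s W t : walk s W t -> odd_ends W s t.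
Proof.
elim=> [s' x | s' u t' i W' isu _ IH x]; first by rewrite /degs big_nil eqxx.
rewrite degs_cons (joins_ends x isu) !oddD !oddb IH.
by case: (x == s'); case: (x == u); case: (x == t').
Qed.

Lemma connected_from_incident E s : connected_from E s -> E != [::] ->
  exists i u, i \in E /\ joins i s u.
Proof.
move/forallP/(_ [set s]); rewrite inE eqxx /= => /orP[allin | /hasP[i Ei]].
  case: E allin => [//|i E] /andP[iin _] _; exists i, s; split; first exact: mem_head.
  move: iin; rewrite /inside !inE => /andP[/eqP e1 /eqP e2].
  by rewrite /joins [g i]surjective_pairing e1 e2 eqxx.
rewrite /crossing !inE => cross _; exists i.
have [e1 | n1] := eqVneq (g i).1 s.
  by exists (g i).2; rewrite /joins -e1 -surjective_pairing eqxx.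
move: cross; rewrite (negbTE n1) => /negPn /eqP e2; exists (g i).1.
by rewrite /joins -e2 -surjective_pairing eqxx orbT.
Qed.

Lemma connected_from_joins E i s u : i \in E -> joins i s u ->
  connected_from E s -> connected_from E u.
Proof.
move=> Ei isu /forallP conE; apply/forallP => A; apply/implyP => uA.
have [sA | sNA] := boolP (s \in A); first by have := conE A; rewrite sA.
apply/orP; right; apply/hasP; exists i => //.
by rewrite (joins_crossing A isu) (negbTE sNA) uA.
Qed.

Lemma connected_from_inside E E' i a b (X : {set T}) :
  perm_eq E (i :: E') -> joins i a b -> a \in X -> b \notin X ->
  {in E', forall j, ~~ crossing X j} ->
  connected_from E a -> connected_from (filter (inside X) E') a.
Proof.
move=> eE iab aX bNX noncrossing /forallP conE.
apply/forallP => B; apply/implyP => aB.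
pose B' := (B :&: X) :|: ~: X.
have inB'_in y : y \in X -> (y \in B') = (y \in B).
  by rewrite !inE => ->; rewrite andbT orbF.
have inB'_out y : y \notin X -> y \in B' by rewrite !inE => ->; rewrite orbT.
have := conE B'; rewrite inB'_in // aB /= => /orP[/allP allin | /hasP[j]].
  apply/orP; left; apply/allP => j; rewrite mem_filter /inside.
  move=> /andP[/andP[j1 j2] jE']; have := allin j.
  by rewrite (perm_mem eE) inE jE' orbT /inside !inB'_in //; apply.
rewrite (perm_mem eE) inE => /orP[/eqP -> | jE'].
  by rewrite (joins_crossing _ iab) inB'_in // aB inB'_out.
have := noncrossing j jE'; rewrite /crossing negbK => /eqP same.
have [j1 | j1] := boolP ((g j).1 \in X).
  rewrite !inB'_in -?same // => cross; apply/orP; right; apply/hasP.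
  by exists j; rewrite // mem_filter /inside -same j1 jE'.
by rewrite !inB'_out -?same.
Qed.

Lemma start_notin_cut E E' i s u (A : {set T}) :
  perm_eq E (i :: E') -> joins i s u -> u \in A -> ~~ all (inside A) E' ->
  {in E', forall j, ~~ crossing A j} ->
  connected_from E s -> s \notin A.
Proof.
move=> eE isu uA not_inside noncrossing /forallP/(_ A); apply: contraTN => sA.
rewrite sA /= negb_or; apply/andP; split.
  apply: contra not_inside => /allP allin; apply/allP => j jE'.
  by apply: allin; rewrite (perm_mem eE) inE jE' orbT.
apply/hasPn => j; rewrite (perm_mem eE) inE => /orP[/eqP -> | /noncrossing //].
by rewrite (joins_crossing A isu) sA uA.
Qed.

Lemma perm_filter_sides A E : {in E, forall j, ~~ crossing A j} ->
  perm_eq E (filter (inside A) E ++ filter (inside (~: A)) E).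
Proof.
move=> noncrossing.
have -> : filter (inside (~: A)) E = filter (predC (inside A)) E.
  apply: eq_in_filter => j /noncrossing; rewrite /crossing /inside !inE negbK.
  by move=> /eqP ->; rewrite !andbb.
by rewrite perm_sym perm_filterC.
Qed.

Theorem euler_walk n E s t : size E <= n -> odd_ends E s t -> connected_from E s ->
  exists2 W, perm_eq W E & walk s W t.
Proof.
elim: n E s t => [|n IHn] E s t szE oddE conE.
  move: szE oddE; rewrite leqn0 size_eq0 => /eqP -> /odd_ends_nil ->.
  by exists [::]; last exact: walk_nil.
have [E0 | nzE] := eqVneq E [::].
  by move: oddE; rewrite E0 => /odd_ends_nil ->; exists [::]; last exact: walk_nil.
have [i [u [Ei isu]]] := connected_from_incident conE nzE.
set E' := rem i E; have eE : perm_eq E (i :: E') := perm_to_rem Ei.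
have szE' : size E' <= n by rewrite size_rem // -ltnS prednK ?lt0n ?size_eq0.
have oddE' : odd_ends E' u t := odd_ends_cons isu (odd_ends_perm eE oddE).
have [conE' | /forallPn[A]] := boolP (connected_from E' u).
  have [W eW wW] := IHn E' u t szE' oddE' conE'.
  exists (i :: W); last exact: walk_cons isu wW.
  by rewrite perm_sym (perm_trans eE) // perm_cons perm_sym.
(* Removing the edge su disconnects E: walk around the side of s first, then
   cross to u and finish inside the side A of u. *)
rewrite negb_imply negb_or => /and3P[uA not_inside /hasPn noncrossing].
have noncrossingC : {in E', forall j, ~~ crossing (~: A) j}.
  by move=> j; rewrite crossingC; apply: noncrossing.
have sNA := start_notin_cut eE isu uA not_inside noncrossing conE.
have tA := odd_ends_side noncrossing oddE' uA.
set C := filter (inside A) E'; set D := filter (inside (~: A)) E'.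
have conC : connected_from C u.
  apply: connected_from_inside eE _ uA sNA noncrossing _; first by rewrite joins_sym.
  exact: connected_from_joins Ei isu conE.
have conD : connected_from D s.
  by apply: connected_from_inside eE isu _ _ noncrossingC conE; rewrite !inE ?negbK.
have oddC : odd_ends C u t := odd_ends_inside noncrossing oddE' uA tA.
have oddD : odd_ends D s s.
  by apply: odd_ends_outside noncrossingC oddE' _ _; rewrite inE negbK.
have szF X : size (filter (inside X) E') <= n.
  by rewrite size_filter (leq_trans (count_size _ _)).
have [W1 eW1 wW1] := IHn C u t (szF _) oddC conC.
have [W2 eW2 wW2] := IHn D s s (szF _) oddD conD.
exists (W2 ++ i :: W1); last exact: walk_cat wW2 (walk_cons isu wW1).
rewrite -cat1s perm_catCA /= perm_sym (perm_trans eE) // perm_cons.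
rewrite (perm_trans (perm_filter_sides noncrossing)) // perm_catC.
by rewrite perm_sym; apply: perm_cat.
Qed.

Lemma walk_nthP s W t : walk s W t <-> exists w : nat -> T,
  [/\ w 0 = s, w (size W) = t &
      forall i0 k, k < size W -> joins (nth i0 W k) (w k) (w k.+1)].
Proof.
split=> [|[w [<- <- wW]]].
  elim=> [s' | s' u t' i W' isu _ [w [w0 wt wW']]]; first by exists (fun=> s').
  exists (fun k => if k is k'.+1 then w k' else s'); split=> // i0 [|k] lt_kW /=.
    by rewrite w0.
  exact: wW'.
elim: W w wW => [|i W IHW] w wW; first exact: walk_nil.
apply: walk_cons (wW i 0 _) (IHW (fun k => w k.+1) _) => // i0 k.
exact: wW i0 k.+1.
Qed.

End EulerianWalks.

Lemma card_set_of (T : finType) : #|{set T}| = 2 ^ #|T|.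
Proof.
by rewrite -cardsT -card_powerset; apply: eq_card => A; rewrite powersetE subsetT.
Qed.

Lemma leq_exp2rW m1 m2 e : m1 <= m2 -> m1 ^ e <= m2 ^ e.
Proof. by move=> le_m12; elim: e => // e IHe; rewrite !expnS leq_mul. Qed.

Lemma card_bigcup_le (I T : finType) (P : pred I) (F : I -> {set T}) :
  #|\bigcup_(i | P i) F i| <= \sum_(i | P i) #|F i|.
Proof.
elim/big_rec2: _ => [|i U k _ le_Uk]; first by rewrite cards0.
by rewrite (leq_trans (leq_card_setU _ _)) // leq_add2l.
Qed.

Definition same_side (T : finType) (A : {set T}) :=
  [set p : T * T | (p.1 \in A) == (p.2 \in A)].

Lemma card_same_side (T : finType) (A : {set T}) :
  0 < #|A| < #|T| -> #|same_side A| <= #|T|.-1 ^ 2 + 1.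
Proof.
case/andP => A_gt0 A_ltT.
have : #|same_side A| <= #|A| * #|A| + #|~: A| * #|~: A|.
  rewrite -!cardsX (leq_trans _ (leq_card_setU _ _)) //.
  apply/subset_leq_card/subsetP => -[x y]; rewrite !inE /=.
  by case: (x \in A); case: (y \in A).
have := cardsC A; nia.
Qed.

Section LabeledGraphs.

Variables (gT : finGroupType) (n : nat).
Implicit Type g : lgraph gT n.

Lemma deg_degs g x : deg g x = degs g (index_enum 'I_n) x.
Proof. by []. Qed.

Lemma euler_pathP g : has_euler_path g <->
  exists2 W, perm_eq W (index_enum 'I_n) & exists t, walk g 1%g W t.
Proof.
split=> [|[W eW [t /walk_nthP[w [w0 _ wW]]]]].
  case/existsP => p /existsP[v /andP[/eqP v0 /forallP pv]].
  exists (map p (enum 'I_n)).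
    apply: uniq_perm; rewrite ?index_enum_uniq //.
      by rewrite (map_inj_uniq (@perm_inj _ p)) enum_uniq.
    by move=> i; rewrite mem_index_enum -[i](permKV p) map_f ?mem_enum.
  exists (v (inord n)); apply/walk_nthP; exists (fun k => v (inord k)).
  rewrite size_map size_enum_ord; split=> // [|i0 k lt_kn].
    by rewrite -v0; congr (v _); apply: val_inj; rewrite /= inordK.
  rewrite (nth_map i0) ?size_enum_ord //.
  have := pv (nth i0 (enum 'I_n) k); congr (joins _ _ (v _) (v _)); apply: val_inj.
    by rewrite /= nth_enum_ord ?inordK // ltnW.
  by rewrite /= /bump add1n nth_enum_ord ?inordK.
have szW : size W = n.
  by rewrite (perm_size eW) [index_enum _]unlock -enumT -cardT card_ord.
have uW : uniq W by rewrite (perm_uniq eW) index_enum_uniq.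
have p_inj : injective (fun i : 'I_n => nth i W i).
  move=> i j /eqP; rewrite (set_nth_default j) ?szW // nth_uniq ?szW //.
  by move/eqP/val_inj.
apply/existsP; exists (perm p_inj); apply/existsP; exists [ffun k : 'I_n.+1 => w k].
rewrite ffunE w0 eqxx; apply/forallP => i /=; rewrite !ffunE permE lift0.
by apply: wW; rewrite szW.
Qed.

Lemma euler_pseudo_pathP g :
  has_euler_pseudo_path g <-> exists t, odd_ends g (index_enum 'I_n) 1%g t.
Proof.
split=> [/existsP[t /andP[/forallP even_others ends]] | [t oddg]].
  exists t => x; rewrite -deg_degs.
  have [-> | x1] := eqVneq x 1%g.
    by move: ends; rewrite [1%g == t]eq_sym; case: (t == 1%g) => [/negbTE | /andP[]].
  have [xt | xt] := eqVneq x t.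
    by move: ends; rewrite -xt (negbTE x1) => /andP[_ ->].
  by have := even_others x; rewrite x1 xt /= => /negbTE.
apply/existsP; exists t; rewrite !deg_degs !oddg eqxx; apply/andP; split.
  apply/forallP => x; apply/implyP => /andP[/negbTE x1 /negbTE xt].
  by rewrite deg_degs oddg x1 xt.
by rewrite eqxx [1%g == t]eq_sym; case: (t == 1%g).
Qed.

Lemma euler_path_pseudo_path g : has_euler_path g -> has_euler_pseudo_path g.
Proof.
case/euler_pathP => W eW [t /walk_odd_ends oddW].
by apply/euler_pseudo_pathP; exists t; apply: odd_ends_perm eW oddW.
Qed.

Lemma euler_pseudo_path_connected g : has_euler_pseudo_path g ->
  connected_from g (index_enum 'I_n) 1%g -> has_euler_path g.
Proof.
case/euler_pseudo_pathP => t oddg cong; apply/euler_pathP.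
have [W eW wW] := euler_walk (leqnn _) oddg cong.
by exists W => //; exists t.
Qed.

Definition disconnected :=
  [set g : lgraph gT n | ~~ connected_from g (index_enum 'I_n) 1%g].

Lemma m_k_le_gamma_k : m_k gT n <= gamma_k gT n.
Proof.
by apply/subset_leq_card/subsetP => g; rewrite !inE; apply: euler_path_pseudo_path.
Qed.

Lemma gamma_k_le_m_k_disconnected : gamma_k gT n <= m_k gT n + #|disconnected|.
Proof.
apply: leq_trans (leq_card_setU _ _); apply/subset_leq_card/subsetP => g.
rewrite !inE => pg; have [cg | _] := boolP (connected_from _ _ _); last by rewrite orbT.
by rewrite euler_pseudo_path_connected.
Qed.

(* All edges of a disconnected graph stay on one side of a proper cut containing 1. *)
Lemma card_disconnected : #|disconnected| <= 2 ^ #|gT| * (#|gT|.-1 ^ 2 + 1) ^ n.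
Proof.
pose cut_graphs A := [set g : lgraph gT n | g \in ffun_on (same_side A)].
pose cuts := [pred A : {set gT} | (1%g \in A) && (A != setT)].
have sub : disconnected \subset \bigcup_(A in cuts) cut_graphs A.
  apply/subsetP => g; rewrite inE => /forallPn[A]; rewrite negb_imply negb_or.
  case/and3P => A1 not_inside /hasPn noncrossing; apply/bigcupP; exists A.
    rewrite inE A1; apply: contraNneq not_inside => ->.
    by apply/allP => i _; rewrite /inside !inE.
  rewrite inE; apply/ffun_onP => i; rewrite inE.
  by have := noncrossing i (mem_index_enum i); rewrite /crossing negbK.
rewrite (leq_trans (subset_leq_card sub)) // (leq_trans (card_bigcup_le _ _)) //.
apply: (@leq_trans (\sum_(A in cuts) (#|gT|.-1 ^ 2 + 1) ^ n)); last first.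
  by rewrite sum_nat_const leq_mul2r -card_set_of max_card orbT.
apply: leq_sum => A /andP[A1 AT].
rewrite cardsE card_ffun_on card_ord leq_exp2rW // card_same_side //.
by rewrite -cardsT proper_card ?properT // andbT card_gt0; apply/set0Pn; exists 1%g.
Qed.

End LabeledGraphs.

Section EvenExtension.

Variables (gT : finGroupType) (m : nat) (h : lgraph gT m).

Definition parity_edge (x : gT) : gT * gT :=
  if (x != 1%g) && odd (deg h x) then (1%g, x) else (1%g, 1%g).

Definition even_extension : lgraph gT (m + #|gT|) :=
  [ffun i => match split i with inl j => h j | inr j => parity_edge (enum_val j) end].

Lemma even_extension_lshift j : even_extension (lshift _ j) = h j.
Proof. by rewrite ffunE (unsplitK (inl _ j)). Qed.

Lemma deg_even_extension x :
  deg even_extension x = deg h x + \sum_y ((x == 1%g) + (x == (parity_edge y).2)).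
Proof.
rewrite /deg big_split_ord; congr (_ + _).
  by apply: eq_bigr => j _; rewrite even_extension_lshift.
rewrite [RHS](eq_bigl (mem gT)) // [RHS]big_enum_val.
apply: eq_bigr => j _; rewrite ffunE (unsplitK (inr _ j)).
by rewrite /parity_edge; case: ifP.
Qed.

Lemma odd_deg_even_extension x : x != 1%g -> ~~ odd (deg even_extension x).
Proof.
move=> x1; rewrite deg_even_extension (negbTE x1) (bigD1 x) //= big1 => [|y yx].
  rewrite /parity_edge x1 addn0 /=.
  by case: ifPn => odd_x /=; rewrite ?eqxx ?(negbTE x1) ?addn0 // oddD odd_x.
by rewrite /parity_edge; case: ifP => _; rewrite /= ?(negbTE x1) // eq_sym (negbTE yx).
Qed.

Lemma even_extension_pseudo_path : has_euler_pseudo_path even_extension.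
Proof.
apply/existsP; exists 1%g; rewrite eqxx /=; apply/andP; split.
  by apply/forallP => x; apply/implyP => /andP[x1 _]; apply: odd_deg_even_extension.
have := odd_sum_degs even_extension (index_enum _); rewrite odd_sum (bigD1 1%g) //=.
by rewrite big1 ?addbF // => y y1; apply/negbTE/odd_deg_even_extension.
Qed.

End EvenExtension.

Lemma even_extension_inj (gT : finGroupType) m : injective (@even_extension gT m).
Proof.
move=> h1 h2 eq_h; apply/ffunP => j.
by rewrite -(even_extension_lshift h1) -(even_extension_lshift h2) eq_h.
Qed.

Lemma gamma_k_ge (gT : finGroupType) n :
  #|gT| <= n -> (#|gT| ^ 2) ^ (n - #|gT|) <= gamma_k gT n.
Proof.
move=> le_kn; rewrite -[in gamma_k _ n](subnK le_kn); set m := n - #|gT|.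
have -> : (#|gT| ^ 2) ^ m = #|{: lgraph gT m}|.
  by rewrite card_ffun card_prod card_ord mulnn.
rewrite -cardsT -(card_imset _ (@even_extension_inj gT m)).
apply/subset_leq_card/subsetP => _ /imsetP[h _ ->].
by rewrite inE even_extension_pseudo_path.
Qed.

Lemma leq_Bernoulli q e : q ^ e * (q + e) <= q.+1 ^ e * q.
Proof.
elim: e => [|e IHe]; first by rewrite addn0.
rewrite !expnS; nia.
Qed.

Lemma gamma_k_sub_m_k (gT : finGroupType) n : 1 < #|gT| -> #|gT| <= n ->
  (gamma_k gT n - m_k gT n) * n <=
  2 ^ #|gT| * (#|gT| ^ 2) ^ #|gT| * (#|gT|.-1 ^ 2 + 1) * gamma_k gT n.
Proof.
move=> k_gt1 le_kn; set k := #|gT|; set q := k.-1 ^ 2 + 1.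
have gap : gamma_k gT n - m_k gT n <= 2 ^ k * q ^ n.
  rewrite leq_subLR (leq_trans (gamma_k_le_m_k_disconnected _ _)) //.
  by rewrite leq_add2l card_disconnected.
have lower := gamma_k_ge le_kn.
have q_lt_k2 : q.+1 <= k ^ 2 by rewrite /q; nia.
have power : q.+1 ^ n <= (k ^ 2) ^ k * gamma_k gT n.
  rewrite (leq_trans (leq_exp2rW n q_lt_k2)) //.
  by rewrite -{1}(subnKC le_kn) expnD leq_mul2l lower orbT.
rewrite (leq_trans (leq_mul gap (leq_addl q n))) // -mulnA.
rewrite (leq_trans (leq_mul (leqnn _) (leq_Bernoulli q n))) //; nia.
Qed.

Local Open Scope ring_scope.

Lemma dist_ratio_le (R : realFieldType) (a b c n : nat) :
  (a <= b)%N -> (0 < b)%N -> (0 < n)%N -> ((b - a) * n <= c * b)%N ->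
  `|a%:R / b%:R - 1| <= c%:R / n%:R :> R.
Proof.
move=> le_ab b_gt0 n_gt0 le_gap.
have -> : a%:R / b%:R - 1 = - ((b - a)%:R / b%:R) :> R.
  by rewrite natrB // mulrBl divff ?pnatr_eq0 -?lt0n // opprB.
rewrite normrN ger0_norm ?divr_ge0 // ler_pdivrMr ?ltr0n // mulrAC.
by rewrite ler_pdivlMr ?ltr0n // -!natrM ler_nat.
Qed.

Theorem mainTheorem16 (gT : finGroupType) (hk : (2 <= #|gT|)%N) :
  forall eps : rat, 0 < eps ->
  exists N : nat, forall n : nat, (N <= n)%N ->
    `| (m_k gT n)%:R / (gamma_k gT n)%:R - 1 | < eps.
Proof.
move=> eps eps_gt0.
set c := (2 ^ #|gT| * (#|gT| ^ 2) ^ #|gT| * (#|gT|.-1 ^ 2 + 1))%N.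
exists (maxn #|gT| (Num.bound (c%:R / eps))) => n; rewrite geq_max => /andP[le_kn le_bn].
have n_gt0 : (0 < n)%N by rewrite (leq_trans _ le_kn) // ltnW.
have gamma_gt0 : (0 < gamma_k gT n)%N.
  by rewrite (leq_trans _ (gamma_k_ge le_kn)) // !expn_gt0 (ltnW hk).
have := gamma_k_sub_m_k hk le_kn.
move/(dist_ratio_le rat (m_k_le_gamma_k _ _) gamma_gt0 n_gt0)/le_lt_trans; apply.
rewrite ltr_pdivrMr ?ltr0n // mulrC -ltr_pdivrMr //.
by rewrite (lt_le_trans (archi_boundP _)) ?ler_nat // divr_ge0 // ltW.
Qed.
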